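(* Let $Y$ be a Young diagram with row lengths $a_1\ge\cdots\ge a_m\ge0$, let $P$ be a 2-cover of $H(Y)$, and let $Q=P\cap(C\times S)$. Then $$|P|\ge |Q|+\sum_{i=1}^m\nu(a_i,Q).$$
   Context: $H(Y)$ is the hypergraph with vertex sides $R=\{r_1,\dots,r_m\}$, $C=\{c_1,\dots,c_{a_1}\}$, $S=\{s_1,\dots,s_{a_1}\}$ and edges $\{r_i,c_j,s_k\}$ for $1\le i\le m$, $1\le j,k\le a_i$. For disjoint sets $A,B$, $A\times B$ is the set of pairs $\{a,b\}$ with $a\in A,b\in B$. A 2-cover of $H(Y)$ is a set of 2-element vertex sets such that every edge of $H(Y)$ contains a member of it. $\nu(\ell,Q)$ is the matching number of the bipartite graph with sides $\{c_1,\dots,c_\ell\}$, $\{s_1,\dots,s_\ell\}$ and edges $\{c_js_k:1\le j,k\le\ell\}\setminus Q$. *)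

From mathcomp Require Import all_boot.
Set Implicit Arguments. Unset Strict Implicit. Unset Printing Implicit Defensive.

(* Vertices of H(Y): R = 'I_m (rows), C = 'I_n, S = 'I_n, with n = a_1.
   Indices are 0-based: r_i ~ rv (i-1), etc. *)
Definition vert (m n : nat) := ('I_m + ('I_n + 'I_n))%type.
Definition rv {m n} (i : 'I_m) : vert m n := inl i.
Definition cv {m n} (j : 'I_n) : vert m n := inr (inl j).
Definition sv {m n} (k : 'I_n) : vert m n := inr (inr k).

Definition two_cover (a : seq nat) (P : {set {set vert (size a) (head 0 a)}}) :=
  (forall e, e \in P -> #|e| = 2) /\
  (forall (i : 'I_(size a)) (j k : 'I_(head 0 a)),
      j < nth 0 a i -> k < nth 0 a i ->
      exists2 e, e \in P & e \subset [set rv i; cv j; sv k]).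
Arguments two_cover : clear implicits.

Definition CS_part {m n} (P : {set {set vert m n}}) : {set {set vert m n}} :=
  [set e in P | [exists j, exists k, e == [set cv j; sv k]]].

(* M is a matching (given as a set of pairs (j,k) = edge c_j s_k) in the bipartite
   graph on c_1..c_l, s_1..s_l with edges {c_j s_k} \ Q. *)
Definition is_matching {m n} (l : nat) (Q : {set {set vert m n}})
    (M : {set 'I_n * 'I_n}) : bool :=
  [forall p in M, [&& p.1 < l, p.2 < l & [set cv p.1; sv p.2] \notin Q]] &&
  [forall p in M, forall q in M, ((p.1 == q.1) || (p.2 == q.2)) ==> (p == q)].

Definition nu {m n} (l : nat) (Q : {set {set vert m n}}) : nat :=
  \max_(M : {set 'I_n * 'I_n} | is_matching l Q M) #|M|.

From mathcomp Require Import all_boot.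

(* P contains the pairwise disjoint families Q = P ∩ (C × S) and
   P_i = P ∩ ({r_i} × (C ∪ S)), one for each row, so |P| >= |Q| + Σ_i |P_i|.
   For an edge c_j s_k ∉ Q of a matching counted by ν(a_i, Q), the member
   of P covering {r_i, c_j, s_k} is not {c_j, s_k}, hence it is {r_i, c_j} or
   {r_i, s_k}; as matching edges share no vertex, this is an injection of the
   matching into P_i, so ν(a_i, Q) <= |P_i|.  The bound holds row by row. *)

Set Implicit Arguments.
Unset Strict Implicit.
Unset Printing Implicit Defensive.

Lemma card2_subset_set3 (T : finType) (a b c : T) (e : {set T}) :
  e \subset [set a; b; c] -> #|e| = 2 ->
  [\/ e = [set a; b], e = [set a; c] | e = [set b; c]].
Proof.
move=> sub_e /eqP/cards2P[x [y [xy def_e]]]; subst e.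
have [xe ye] : x \in [set a; b; c] /\ y \in [set a; b; c].
  by split; apply: (subsetP sub_e); rewrite !inE eqxx ?orbT.
move: xe ye xy; rewrite !inE -!orbA => /or3P[]/eqP-> /or3P[]/eqP->; rewrite ?eqxx // => _.
all: first [by constructor 1 | by constructor 2 | by constructor 3
           | rewrite setUC; by [constructor 1 | constructor 2 | constructor 3]].
Qed.

Section TwoCover.

Variables (m n : nat) (P : {set {set vert m n}}).

Definition row_part (i : 'I_m) : {set {set vert m n}} :=
  [set e in P | [exists x : 'I_n + 'I_n, e == [set rv i; inr x]]].

Lemma CS_pair_in_CS_part (j k : 'I_n) :
  ([set cv j; sv k] \in CS_part P) = ([set cv j; sv k] \in P).
Proof.
rewrite inE andb_idr // => _.
by apply/existsP; exists j; apply/existsP; exists k.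
Qed.

Lemma row_part_disjoint (i i' : 'I_m) :
  i != i' -> [disjoint row_part i & row_part i'].
Proof.
move=> neq_ii'; rewrite -setI_eq0; apply/eqP/setP => e; rewrite !inE.
apply/negbTE/negP => /andP[/andP[_ /existsP[x /eqP ->]] /andP[_ /existsP[y /eqP E]]].
have := set21 (rv i) (inr x); rewrite E => /set2P[[/eqP] | //].
by rewrite (negbTE neq_ii').
Qed.

Lemma CS_part_row_part_disjoint (i : 'I_m) :
  [disjoint CS_part P & row_part i].
Proof.
rewrite -setI_eq0; apply/eqP/setP => e; rewrite !inE.
apply/negbTE/negP => /andP[/andP[_ /existsP[j /existsP[k /eqP ->]]] /andP[_ /existsP[x /eqP E]]].
by have := set21 (rv i) (inr x); rewrite -E => /set2P[].
Qed.

Lemma card_CS_part_row_parts :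
  #|CS_part P| + \sum_(i < m) #|row_part i| <= #|P|.
Proof.
have sub_P : CS_part P :|: \bigcup_(i < m) row_part i \subset P.
  by apply/subsetP => e /setUP[|/bigcupP[i _]] /setIdP[].
have card_rows : #|\bigcup_(i < m) row_part i| = \sum_(i < m) #|row_part i|.
  rewrite -sum1_card partition_disjoint_bigcup; last exact: row_part_disjoint.
  by apply: eq_bigr => i _; rewrite sum1_card.
rewrite -card_rows -(eqTleqif (leq_card_setU _ _)) ?subset_leq_card //.
by apply: bigcup_disjoint => i _; apply: CS_part_row_part_disjoint.
Qed.

Hypothesis card_P : forall e, e \in P -> #|e| = 2.
Variables (i : 'I_m) (l : nat).
Hypothesis row_covered : forall j k : 'I_n, j < l -> k < l ->
  exists2 e, e \in P & e \subset [set rv i; cv j; sv k].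

Lemma row_edge_covered (j k : 'I_n) : j < l -> k < l ->
  [set cv j; sv k] \notin P -> [set rv i; cv j] \in P \/ [set rv i; sv k] \in P.
Proof.
move=> jl kl csP; have [e eP sub_e] := row_covered jl kl.
by case: (card2_subset_set3 sub_e (card_P eP)) => def_e;
  [left | right | move: csP]; rewrite -def_e ?eP.
Qed.

Lemma card_matching_le_row_part (M : {set 'I_n * 'I_n}) :
  is_matching l (CS_part P) M -> #|M| <= #|row_part i|.
Proof.
move=> /andP[/forall_inP edgeM /forall_inP disjM].
pose g (p : 'I_n * 'I_n) : 'I_n + 'I_n :=
  if [set rv i; cv p.1] \in P then inl p.1 else inr p.2.
have g_row p : p \in M -> [set rv i; inr (g p)] \in row_part i.
  move=> pM; rewrite inE andbC; apply/andP; split; first by apply/existsP; exists (g p).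
  have /and3P[jl kl] := edgeM p pM; rewrite CS_pair_in_CS_part => csP.
  rewrite /g; case: ifPn => // rcP.
  by case: (row_edge_covered jl kl csP) => //; rewrite (negbTE rcP).
have g_inj : {in M &, injective g}.
  move=> p q pM qM; move/forall_inP/(_ q qM)/implyP: (disjM p pM) => same_pq.
  by rewrite /g; do 2 case: ifP => _; move=> // [] E; apply/eqP/same_pq; rewrite E eqxx ?orbT.
have pair_inj : {in M &, injective (fun p => [set rv i; inr (g p)])}.
  move=> p q pM qM /= E; apply: g_inj => //.
  by have /set2P[|[]] : inr (g p) \in [set rv i; inr (g q)] by rewrite -E set22.
rewrite -(card_in_imset pair_inj); apply: subset_leq_card.
by apply/subsetP => _ /imsetP[p pM ->]; apply: g_row.
Qed.

Lemma nu_le_card_row_part : nu l (CS_part P) <= #|row_part i|.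
Proof. by apply/bigmax_leqP => M; apply: card_matching_le_row_part. Qed.

End TwoCover.

Theorem corollary2 (a : seq nat) (Ha : sorted geq a)
    (P : {set {set vert (size a) (head 0 a)}}) (HP : two_cover a P) :
  #|CS_part P| + \sum_(i < size a) nu (nth 0 a i) (CS_part P) <= #|P|.
Proof.
case: HP => card_P covered.
apply: leq_trans (card_CS_part_row_parts P); rewrite leq_add2l.
by apply: leq_sum => i _; apply: nu_le_card_row_part => //; apply: covered.
Qed.
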